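(* Let $G$ be a coarsely bottlenecked graph and let $H$ be a finite graph which is not an asymptotic minor of $G$. Then $G$ is quasi-isometric to a graph $G'$ which contains no $5$-fat $H$ minor. Furthermore, such a $G'$ may be constructed from $G$ by repeatedly (finitely many times) taking $(2,2)$-skeletons, starting from $G$, and the constants of this quasi-isometry may be determined by the scale and coarse bottlenecking number of $G$ (i.e. the constants $M,n$ for which $G$ is $M$-fat $n$-bottlenecked) together with a scale $M_0$ at which $G$ does not contain $H$ as an $M_0$-fat minor.
   Context: All graphs are connected (and unbounded); multi-edges are allowed. $d$ denotes the graph metric on vertices (least number of edges in a path). For $M\ge 0$: sets $X,Y$ of vertices are $M$-disjoint if $d(x,y)>M$ for all $x\in X,y\in Y$; a set $X$ is $M$-connected if any two of its points are joined by a finite sequence of points of $X$ in which consecutive points have distance $\le M$; $N_M(S)=\{y: d(s,y)<M \text{ for some } s\in S\}$. An $X,Y$ path is a path from a vertex of $X$ to a vertex of $Y$. Coarse bottlenecking: $G$ is $M$-fat $n$-bottlenecked ($M,n\in\mathbb N$) if for any two connected $M$-disjoint subgraphs $X,Y\subset G$ there is a set $S\subset V(G)\setminus(V(X)\cup V(Y))$ with $|S|=n$ such that every $X,Y$ path meets $N_M(S)$. $G$ is coarsely bottlenecked if it is $M$-fat $n$-bottlenecked for some $M,n$. Fat minors: $H$ is an $M$-fat minor of $G$ if there are connected subgraphs (branch sets) $B_v$, $v\in V(H)$, and paths (branch paths) $P_e$, $e\in E(H)$, with $P_e$ joining $B_u$ to $B_v$ for $e=uv$, such that any two of these sets are $M$-disjoint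 unless they correspond to an incident vertex–edge pair of $H$. $H$ is an asymptotic minor of $G$ if $G$ has an $M$-fat $H$ minor for every $M\in\mathbb N$. Skeletons: given $G$, a root $x_0\in V(G)$, a scale $\lambda\ge1$ and a connectivity $k\ge1$, the layers are $A_{N,\lambda}=\{x\in V(G): N\lambda<d(x,x_0)\le (N+1)\lambda\}$ for integers $N$; each layer is partitioned into blocks, its maximal $k$-connected subsets (distances measured in $G$). The skeleton $G_{\lambda,k}$ has one vertex for each block and an edge between two blocks iff some edge of $G$ joins a vertex of one to a vertex of the other. The $(2,2)$-skeleton of a graph is this construction with $\lambda=k=2$ (the root of a skeleton of $G_{\lambda,k}$ being the block of $x_0$). *)

(* Graphs on an arbitrary vertex type V, given by an
   adjacency relation (multi-edges are irrelevant for every notion used). *)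
From Stdlib Require Import List ZArith.
Import ListNotations.

Set Implicit Arguments.

Section Graphs.
Variable V : Type.
Variable adj : V -> V -> Prop.

Fixpoint is_walk (x : V) (l : list V) : Prop :=
  match l with
  | [] => True
  | y :: l' => adj x y /\ is_walk y l'
  end.

Definition dist_le (x y : V) (n : nat) : Prop :=
  exists l, is_walk x l /\ List.last (x :: l) x = y /\ length l <= n.

Definition dist_lt (x y : V) (n : nat) : Prop :=
  exists l, is_walk x l /\ List.last (x :: l) x = y /\ length l < n.

Definition dist (x y : V) (n : nat) : Prop :=
  dist_le x y n /\ forall m, dist_le x y m -> n <= m.

Definition symmetric_adj : Prop := forall x y, adj x y -> adj y x.

Definition connected_graph : Prop := forall x y, exists n, dist_le x y n.

Definition unbounded_graph : Prop := forall r, exists x y, ~ dist_le x y r.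

Definition gpath (p : list V) (a b : V) : Prop :=
  exists l, p = a :: l /\ is_walk a l /\ List.last p a = b /\ NoDup p.

Definition M_disjoint (M : nat) (X Y : V -> Prop) : Prop :=
  forall x y, X x -> Y y -> ~ dist_le x y M.

Definition conn_set (X : V -> Prop) : Prop :=
  (exists x, X x) /\
  forall x y, X x -> X y ->
    exists l, is_walk x l /\ List.last (x :: l) x = y /\ Forall X l.

Definition nbhd (M : nat) (S : list V) (z : V) : Prop :=
  exists s, In s S /\ dist_lt s z M.

Definition fat_bottlenecked (M n : nat) : Prop :=
  forall X Y : V -> Prop, conn_set X -> conn_set Y -> M_disjoint M X Y ->
    exists S : list V,
      length S = n /\ NoDup S /\ (forall s, In s S -> ~ X s /\ ~ Y s) /\
      forall p x y, X x -> Y y -> gpath p x y ->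
        exists z, In z p /\ nbhd M S z.

Definition coarsely_bottlenecked : Prop := exists M n, fat_bottlenecked M n.

(* A finite (multi)graph H: vertex type VH, edge type EH, endpoints ends. *)
Definition M_fat_minor (M : nat) (VH EH : Type) (ends : EH -> VH * VH) : Prop :=
  exists (B : VH -> V -> Prop) (P : EH -> list V),
    (forall v, conn_set (B v)) /\
    (forall e, exists a b, B (fst (ends e)) a /\ B (snd (ends e)) b /\ gpath (P e) a b) /\
    (forall u v, u <> v -> M_disjoint M (B u) (B v)) /\
    (forall e f, e <> f -> M_disjoint M (fun x => In x (P e)) (fun x => In x (P f))) /\
    (forall v e, v <> fst (ends e) -> v <> snd (ends e) ->
        M_disjoint M (B v) (fun x => In x (P e))).

Definition asymptotic_minor (VH EH : Type) (ends : EH -> VH * VH) : Prop :=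
  forall M, M_fat_minor M ends.

Definition in_layer (x0 : V) (lam : nat) (N : Z) (x : V) : Prop :=
  exists d, dist x x0 d /\
    (N * Z.of_nat lam < Z.of_nat d <= (N + 1) * Z.of_nat lam)%Z.

Fixpoint kchain (k : nat) (X : V -> Prop) (x : V) (l : list V) : Prop :=
  match l with
  | [] => True
  | y :: l' => X y /\ dist_le x y k /\ kchain k X y l'
  end.

(* X is k-connected (distances measured in G) *)
Definition k_connected (k : nat) (X : V -> Prop) : Prop :=
  forall x y, X x -> X y -> exists l, kchain k X x l /\ List.last (x :: l) x = y.

Definition is_block (k : nat) (L B : V -> Prop) : Prop :=
  (exists x, B x) /\ (forall x, B x -> L x) /\ k_connected k B /\
  forall B' : V -> Prop, (forall x, B x -> B' x) -> (forall x, B' x -> L x) ->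
    k_connected k B' -> forall x, B' x -> B x.

Definition skel_vtx (x0 : V) (lam k : nat) : Type :=
  { B : V -> Prop | exists N : Z, is_block k (in_layer x0 lam N) B }.

Definition skel_adj (x0 : V) (lam k : nat) (B1 B2 : skel_vtx x0 lam k) : Prop :=
  exists x y, proj1_sig B1 x /\ proj1_sig B2 y /\ adj x y.

End Graphs.

(* f : V -> W is a quasi-isometry with constants K (multiplicative) and C
   (additive, also the density constant). *)
Definition quasi_isometry (V W : Type) (adjV : V -> V -> Prop) (adjW : W -> W -> Prop)
  (K C : nat) : Prop :=
  exists f : V -> W,
    (forall x y n m, dist adjV x y n -> dist adjW (f x) (f y) m ->
        n <= K * m + C /\ m <= K * n + C) /\
    (forall w, exists x, dist_le adjW (f x) w C).

(* iter_skel22 V adj x0 W adjW r k : the rooted graph (W, adjW, r) is obtained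
   from (V, adj, x0) by taking (2,2)-skeletons k times, the root of each
   skeleton being the block containing the previous root. *)
Unset Implicit Arguments.
Inductive iter_skel22 (V : Type) (adj : V -> V -> Prop) (x0 : V) :
  forall (W : Type), (W -> W -> Prop) -> W -> nat -> Prop :=
| iter_skel22_0 : iter_skel22 V adj x0 V adj x0 0
| iter_skel22_S : forall (W : Type) (adjW : W -> W -> Prop) (r : W) (k : nat)
    (B : skel_vtx adjW r 2 2),
    iter_skel22 V adj x0 W adjW r k ->
    proj1_sig B r ->
    iter_skel22 V adj x0 (skel_vtx adjW r 2 2) (@skel_adj W adjW r 2 2) B (S k).

(* The block map onto the (2,2)-skeleton is 1-Lipschitz and surjective, and it
   at least halves distances.  Hence the closed 1-neighbourhoods of the blocks
   of an F-fat minor of the skeleton form a (2F - 2)-fat minor of G, and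
   2F - 2 >= F + 3 once F >= 5: after M0 skeleton steps, a 5-fat H minor would
   give an M0-fat one in G.  Bottlenecking makes each step a quasi-isometry:
   separating a ball around the root from a far block by n sets of radius M
   covers the block by n balls of radius 2M + 2, which bounds the diameter of
   blocks; and skeletons of an M-bottlenecked graph are (M + 1)-bottlenecked,
   so the constants stay uniform over the M0 steps. *)

From Stdlib Require Import List ZArith Lia Relations Wf_nat.
From Stdlib Require Import Classical FunctionalExtensionality PropExtensionality.
From Stdlib Require Import ProofIrrelevance ClassicalEpsilon.
Import ListNotations.

Set Implicit Arguments.
Unset Strict Implicit.

Section Walks.
Variable V : Type.
Variable adj : V -> V -> Prop.

Lemma last_cons_default (x d d' : V) l : last (x :: l) d = last (x :: l) d'.
Proof.
  revert x; induction l as [|a l IH]; intros x; [reflexivity|].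
  change (last (a :: l) d = last (a :: l) d'). apply IH.
Qed.

Lemma last_cons_cons (x y : V) l : last (x :: y :: l) x = last (y :: l) y.
Proof. change (last (y :: l) x = last (y :: l) y). apply last_cons_default. Qed.

Lemma last_cons_app (x : V) l1 l2 :
  last (x :: l1 ++ l2) x = last (last (x :: l1) x :: l2) (last (x :: l1) x).
Proof.
  revert x; induction l1 as [|a l1 IH]; intros x; [reflexivity|].
  cbn [app]. rewrite !last_cons_cons. apply IH.
Qed.

Lemma last_app_cons l1 (x : V) l2 d d' : last (l1 ++ x :: l2) d = last (x :: l2) d'.
Proof.
  destruct l1 as [|a l1]; [apply last_cons_default|]. cbn [app].
  rewrite (last_cons_default a d a), last_cons_app, last_cons_cons.
  apply last_cons_default.
Qed.

Lemma is_walk_app x l1 l2 :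
  is_walk adj x (l1 ++ l2) <-> is_walk adj x l1 /\ is_walk adj (last (x :: l1) x) l2.
Proof.
  revert x; induction l1 as [|y l1 IH]; intros x; cbn [is_walk app]; [tauto|].
  rewrite IH, last_cons_cons. tauto.
Qed.

Lemma dist_le_refl x n : dist_le adj x x n.
Proof. exists []. simpl. repeat split; auto. lia. Qed.

Lemma dist_le_weaken x y a b : dist_le adj x y a -> a <= b -> dist_le adj x y b.
Proof. intros [l [H1 [H2 H3]]] Hab. exists l. repeat split; auto. lia. Qed.

Lemma dist_le_adj x y : adj x y -> dist_le adj x y 1.
Proof. intros H. exists [y]. simpl. repeat split; auto. Qed.

Lemma dist_le_walk x l : is_walk adj x l -> dist_le adj x (last (x :: l) x) (length l).
Proof. intros H. exists l. auto. Qed.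

Lemma dist_le_trans x y z a b :
  dist_le adj x y a -> dist_le adj y z b -> dist_le adj x z (a + b).
Proof.
  intros [l1 [H1 [H2 H3]]] [l2 [H4 [H5 H6]]].
  exists (l1 ++ l2). split; [|split].
  - apply is_walk_app. rewrite H2. auto.
  - rewrite last_cons_app, H2. auto.
  - rewrite length_app. lia.
Qed.

Lemma dist_lt_pred x y a : dist_lt adj x y a -> 1 <= a /\ dist_le adj x y (a - 1).
Proof. intros [l [H1 [H2 H3]]]. split; [lia|]. exists l. repeat split; auto. lia. Qed.

Lemma dist_lt_succ x y a : dist_le adj x y a -> dist_lt adj x y (S a).
Proof. intros [l [H1 [H2 H3]]]. exists l. repeat split; auto. lia. Qed.

Lemma walk_vertex_dist_le x l z : is_walk adj x l -> In z (x :: l) ->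
  dist_le adj x z (length l) /\ dist_le adj z (last (x :: l) x) (length l).
Proof.
  revert x; induction l as [|y l IH]; intros x Hw Hin.
  - destruct Hin as [<-|[]]. split; apply dist_le_refl.
  - destruct Hw as [Ha Hw]. simpl length. rewrite last_cons_cons.
    replace (S (length l)) with (1 + length l) by lia.
    destruct Hin as [<-|Hin].
    + split; [apply dist_le_refl|].
      eapply dist_le_trans; [apply dist_le_adj, Ha | apply dist_le_walk, Hw].
    + destruct (IH y Hw Hin) as [A B]. split.
      * eapply dist_le_trans; [apply dist_le_adj, Ha | exact A].
      * eapply dist_le_weaken; [exact B | lia].
Qed.

Lemma dist_unique x y a b : dist adj x y a -> dist adj x y b -> a = b.
Proof. intros [H1 H2] [H3 H4]. specialize (H2 _ H3). specialize (H4 _ H1). lia. Qed.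

Lemma dist_exists x y : (exists m, dist_le adj x y m) -> exists d, dist adj x y d.
Proof.
  intros Hm.
  destruct (dec_inh_nat_subset_has_unique_least_element (dist_le adj x y)
              (fun m => classic _) Hm) as [d [[Hd Hmin] _]].
  exists d. split; auto.
Qed.

Lemma walk_to_path x l : is_walk adj x l ->
  exists p, gpath adj p x (last (x :: l) x) /\ incl p (x :: l).
Proof.
  revert x; induction l as [|y l IH]; intros x Hw.
  - exists [x]. split; [|apply incl_refl].
    exists []. repeat split; auto. repeat constructor. intros [].
  - destruct Hw as [Ha Hw]. rewrite last_cons_cons.
    destruct (IH y Hw) as [p [[l' [Hp [Hw' [Hl Hnd]]]] Hinc]].
    destruct (classic (In x p)) as [Hin|Hnin].
    + destruct (in_split x p Hin) as [p1 [p2 Hsp]].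
      exists (x :: p2). split.
      * exists p2. split; [reflexivity|split; [|split]].
        -- rewrite Hp in Hsp. destruct p1 as [|a p1]; inversion Hsp; subst; auto.
           apply is_walk_app in Hw' as [_ Hw']. apply Hw'.
        -- rewrite <- Hl, Hsp. symmetry. apply last_app_cons.
        -- rewrite Hsp in Hnd. apply NoDup_app_remove_l in Hnd. exact Hnd.
      * intros z [<-|Hz]; [left; reflexivity|].
        right. apply Hinc. rewrite Hsp. apply in_or_app; right; right; exact Hz.
    + exists (x :: p). split.
      * exists p. split; [reflexivity|split; [|split]].
        -- rewrite Hp. split; auto.
        -- rewrite <- Hl, Hp. apply last_cons_cons.
        -- constructor; auto.
      * intros z [<-|Hz]; [left|right]; auto.
Qed.

(* The start [x] itself need not satisfy [P]. *)
Definition walk_within (P : V -> Prop) (x y : V) : Prop :=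
  exists l, is_walk adj x l /\ last (x :: l) x = y /\ Forall P l.

Lemma walk_within_refl P x : walk_within P x x.
Proof. exists []. simpl; auto. Qed.

Lemma walk_within_trans P x y z :
  walk_within P x y -> walk_within P y z -> walk_within P x z.
Proof.
  intros [l1 [H1 [H2 H3]]] [l2 [H4 [H5 H6]]].
  exists (l1 ++ l2). split; [|split].
  - apply is_walk_app. rewrite H2. auto.
  - rewrite last_cons_app, H2. auto.
  - apply Forall_app; auto.
Qed.

Lemma walk_within_edge (P : V -> Prop) x y : adj x y -> P y -> walk_within P x y.
Proof. intros H1 H2. exists [y]. simpl. auto. Qed.

Lemma walk_within_dist_le1 (P : V -> Prop) x y :
  dist_le adj x y 1 -> P y -> walk_within P x y.
Proof.
  intros [[|a [|b l]] [H1 [H2 H3]]] Py; simpl in *; subst; try lia.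
  - apply walk_within_refl.
  - apply walk_within_edge; tauto.
Qed.

Lemma walk_within_dist_le2 (P : V -> Prop) x y : dist_le adj x y 2 -> P y ->
  (forall z, dist_le adj x z 1 -> P z) -> walk_within P x y.
Proof.
  intros [[|a [|b [|c l]]] [H1 [H2 H3]]] Py Hnear; simpl in *; subst; try lia.
  - apply walk_within_refl.
  - apply walk_within_edge; tauto.
  - destruct H1 as [Ha [Hb _]].
    apply walk_within_trans with a; apply walk_within_edge; auto.
    apply Hnear, dist_le_adj, Ha.
Qed.

Lemma kchain_app_r k (X : V -> Prop) u l1 l2 :
  kchain adj k X u (l1 ++ l2) -> kchain adj k X (last (u :: l1) u) l2.
Proof.
  revert u; induction l1 as [|a l1 IH]; intros u H; auto.
  destruct H as [_ [_ H]]. rewrite last_cons_cons. auto.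
Qed.

Lemma kchain_Forall k (X : V -> Prop) y l : kchain adj k X y l -> Forall X l.
Proof. revert y; induction l; simpl; intros y H; auto. destruct H as [A [_ C]]. eauto. Qed.

Lemma M_disjoint_weaken M M' (X Y X' Y' : V -> Prop) :
  M_disjoint adj M X Y -> M' <= M ->
  (forall z, X' z -> X z) -> (forall z, Y' z -> Y z) -> M_disjoint adj M' X' Y'.
Proof.
  intros H HM H1 H2 a b Ha Hb Hab. apply (H a b); auto. eapply dist_le_weaken; eauto.
Qed.

Lemma M_fat_minor_weaken (VH EH : Type) (ends : EH -> VH * VH) F F' :
  M_fat_minor adj F ends -> F' <= F -> M_fat_minor adj F' ends.
Proof.
  intros [B [P [H1 [H2 [H3 [H4 H5]]]]]] Hle. exists B, P.
  split; [exact H1|split; [exact H2|split; [|split]]].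
  - intros u v Huv. eapply M_disjoint_weaken; [apply (H3 u v Huv) | exact Hle | auto | auto].
  - intros e f Hef. eapply M_disjoint_weaken; [apply (H4 e f Hef) | exact Hle | auto | auto].
  - intros v e Hv1 Hv2.
    eapply M_disjoint_weaken; [apply (H5 v e Hv1 Hv2) | exact Hle | auto | auto].
Qed.

Lemma conn_set_singleton x : conn_set adj (fun z => z = x).
Proof. split; [exists x; reflexivity|]. intros a b -> ->. exists []. simpl. auto. Qed.

Hypothesis Hsym : symmetric_adj adj.

Lemma dist_le_sym x y a : dist_le adj x y a -> dist_le adj y x a.
Proof.
  intros [l [H1 [<- H3]]]. apply dist_le_weaken with (length l); auto. clear H3.
  revert x H1; induction l as [|y l IH]; intros x Hw; [apply dist_le_refl|].
  destruct Hw as [Ha Hw]. rewrite last_cons_cons. simpl length. rewrite <- Nat.add_1_r.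
  eapply dist_le_trans; [apply IH, Hw | apply dist_le_adj, Hsym, Ha].
Qed.

Lemma walk_within_sym (P : V -> Prop) x y : P x -> walk_within P x y -> walk_within P y x.
Proof.
  intros Px [l [H1 [<- H3]]]. revert x Px H1 H3.
  induction l as [|y l IH]; intros x Px Hw HP; [apply walk_within_refl|].
  destruct Hw as [Ha Hw]. inversion HP; subst. rewrite last_cons_cons.
  eapply walk_within_trans; [apply IH; auto | apply walk_within_edge; auto].
Qed.

Lemma ball_conn_set r h : conn_set adj (fun z => dist_le adj r z h).
Proof.
  assert (Hfrom_r : forall a, dist_le adj r a h -> walk_within (fun z => dist_le adj r z h) r a).
  { intros a [l [W1 [W2 W3]]]. exists l. repeat split; auto.
    apply Forall_forall. intros z Hz. eapply dist_le_weaken; [|exact W3].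
    apply (walk_vertex_dist_le W1). right; exact Hz. }
  split; [exists r; apply dist_le_refl|].
  intros a b Ha Hb. eapply walk_within_trans; [|apply Hfrom_r, Hb].
  apply walk_within_sym; [apply dist_le_refl | apply Hfrom_r, Ha].
Qed.

Lemma split_at_last (Q : V -> Prop) u l : Q u ->
  exists l1 l2, l = l1 ++ l2 /\ Q (last (u :: l1) u) /\ Forall (fun z => ~ Q z) l2.
Proof.
  intros Hu. induction l as [|y l IH] using rev_ind; [exists [], []; auto|].
  destruct IH as [l1 [l2 [E [H1 H2]]]].
  destruct (classic (Q y)) as [Hy|Hy].
  - exists (l ++ [y]), []. rewrite app_nil_r. repeat split; auto.
    change (u :: l ++ [y]) with ((u :: l) ++ [y]). rewrite last_last. exact Hy.
  - exists l1, (l2 ++ [y]). rewrite E, app_assoc. repeat split; auto.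
    apply Forall_app; auto.
Qed.

(* Induction on the number of balls: leave the ball containing the current
   vertex for the last time; one more step of length 2 reaches a vertex whose
   remaining chain avoids that ball. *)
Lemma kchain_covered_dist_le R k (X : V -> Prop) : forall cs, length cs <= k ->
  forall u l, kchain adj 2 X u l ->
  (forall c, In c (u :: l) -> exists s, In s cs /\ dist_le adj s c R) ->
  dist_le adj u (last (u :: l) u) (k * (2 * R + 2)).
Proof.
  induction k as [|k IH]; intros cs Hcs u l Hch Hcov;
    destruct (Hcov u (or_introl eq_refl)) as [s [Hs Hsu]].
  - destruct cs; [destruct Hs | simpl in Hcs; lia].
  - destruct (@split_at_last (fun z => dist_le adj s z R) u l Hsu)
      as [l1 [l2 [-> [H1 H2]]]].
    set (c := last (u :: l1) u) in *.
    assert (Huc : dist_le adj u c (2 * R)).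
    { replace (2 * R) with (R + R) by lia.
      eapply dist_le_trans; [apply dist_le_sym|]; eauto. }
    rewrite last_cons_app. fold c.
    destruct l2 as [|y l2]; [eapply dist_le_weaken; [exact Huc | lia]|].
    apply kchain_app_r in Hch. fold c in Hch. destruct Hch as [_ [Hcy Hch]].
    destruct (in_split s cs Hs) as [S1 [S2 ->]].
    assert (Hrest : dist_le adj y (last (y :: l2) y) (k * (2 * R + 2))).
    { apply (IH (S1 ++ S2)); auto.
      - rewrite length_app in *. simpl in Hcs. lia.
      - intros c0 Hc0.
        destruct (Hcov c0) as [s0 [Hs0 Hd0]].
        { right. apply in_or_app. right. exact Hc0. }
        exists s0. split; auto.
        apply in_app_or in Hs0 as [Hs0|[<-|Hs0]]; try (apply in_or_app; auto).
        exfalso. eapply Forall_forall in H2; eauto. }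
    rewrite last_cons_cons.
    replace (S k * (2 * R + 2)) with (2 * R + (2 + k * (2 * R + 2))) by lia.
    eapply dist_le_trans; [exact Huc|]. eapply dist_le_trans; eauto.
Qed.

End Walks.

(* As [fat_bottlenecked], but with at most [n] centres, which may lie in [X]
   or [Y]: this weaker form is the one that passes to skeletons. *)
Definition weakly_bottlenecked (A : Type) (adjA : A -> A -> Prop) (M n : nat) : Prop :=
  forall X Y : A -> Prop, conn_set adjA X -> conn_set adjA Y -> M_disjoint adjA M X Y ->
    exists S : list A, length S <= n /\
      forall p x y, X x -> Y y -> gpath adjA p x y -> exists z, In z p /\ nbhd adjA M S z.

Lemma fat_bottlenecked_weakly (A : Type) (adjA : A -> A -> Prop) M n :
  fat_bottlenecked adjA M n -> weakly_bottlenecked adjA M n.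
Proof.
  intros HB X Y HX HY HD. destruct (HB X Y HX HY HD) as [cs [Hcs [_ [_ Hsep]]]].
  exists cs. split; [lia | exact Hsep].
Qed.

Section Skeleton.
Variable V : Type.
Variable adj : V -> V -> Prop.
Hypothesis Hsym : symmetric_adj adj.
Hypothesis Hconn : connected_graph adj.
Variable r : V.

Notation layer := (in_layer adj r 2).
Notation skv := (skel_vtx adj r 2 2).
Notation sadj := (@skel_adj V adj r 2 2).

Lemma layer_iff N x :
  layer N x <-> exists d, dist adj x r d /\ (2 * N < Z.of_nat d <= 2 * N + 2)%Z.
Proof.
  unfold in_layer. change (Z.of_nat 2) with 2%Z.
  split; intros [d [H1 H2]]; exists d; split; auto; lia.
Qed.

Lemma layer_exists x : exists N, layer N x.
Proof.
  destruct (dist_exists (Hconn x r)) as [d Hd].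
  destruct (Nat.Even_or_Odd d) as [[k Hk]|[k Hk]];
    [exists (Z.of_nat k - 1)%Z | exists (Z.of_nat k)];
    apply layer_iff; exists d; split; auto; lia.
Qed.

Lemma layer_unique N N' x : layer N x -> layer N' x -> N = N'.
Proof.
  rewrite !layer_iff. intros [d [H1 H2]] [d' [H3 H4]].
  pose proof (dist_unique H1 H3). subst. lia.
Qed.

Definition layer_step N y z := layer N y /\ layer N z /\ dist_le adj y z 2.

Definition same_block x y :=
  exists N, layer N x /\ clos_refl_trans_1n V (layer_step N) x y.

Lemma layer_step_rt_layer N x y :
  clos_refl_trans_1n V (layer_step N) x y -> layer N x -> layer N y.
Proof. induction 1 as [|a b c [_ [Hb _]] _ IH]; auto. Qed.

Lemma layer_step_rt_trans N x y z :
  clos_refl_trans_1n V (layer_step N) x y -> clos_refl_trans_1n V (layer_step N) y z ->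
  clos_refl_trans_1n V (layer_step N) x z.
Proof.
  intros Hxy Hyz. apply clos_rt_rt1n.
  apply rt_trans with y; apply clos_rt1n_rt; assumption.
Qed.

Lemma layer_step_rt_sym N x y :
  clos_refl_trans_1n V (layer_step N) x y -> clos_refl_trans_1n V (layer_step N) y x.
Proof.
  induction 1 as [|a b c [Ha [Hb Hab]] _ IH]; [constructor|].
  apply layer_step_rt_trans with b; auto.
  apply clos_rt1n_step. repeat split; auto. apply (dist_le_sym Hsym); auto.
Qed.

Lemma same_block_refl x : same_block x x.
Proof. destruct (layer_exists x) as [N HN]. exists N. split; [exact HN | constructor]. Qed.

Lemma same_block_layer N x y : same_block x y -> layer N x -> layer N y.
Proof.
  intros [N' [H1 H2]] H3. rewrite (layer_unique H3 H1).
  eapply layer_step_rt_layer; eauto.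
Qed.

Lemma same_block_trans x y z : same_block x y -> same_block y z -> same_block x z.
Proof.
  intros [N [H1 H2]] [N' [H3 H4]]. exists N. split; [exact H1|].
  rewrite (layer_unique H3 (layer_step_rt_layer H2 H1)) in H4.
  eapply layer_step_rt_trans; eauto.
Qed.

Lemma same_block_sym x y : same_block x y -> same_block y x.
Proof.
  intros [N [H1 H2]]. exists N.
  split; [eapply layer_step_rt_layer; eauto | apply layer_step_rt_sym; auto].
Qed.

Lemma kchain_layer_step_rt N (X : V -> Prop) y l :
  (forall a, X a -> layer N a) -> layer N y ->
  kchain adj 2 X y l -> clos_refl_trans_1n V (layer_step N) y (last (y :: l) y).
Proof.
  revert y; induction l as [|z l IH]; intros y HX Hy Hk; [constructor|].
  destruct Hk as [Hz [Hyz Hk]]. rewrite last_cons_cons.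
  apply Relation_Operators.rt1n_trans with z; [repeat split; auto | apply IH; auto].
Qed.

Lemma layer_step_rt_kchain N (X : V -> Prop) y z :
  (forall a b, X a -> layer_step N a b -> X b) -> X y ->
  clos_refl_trans_1n V (layer_step N) y z ->
  exists l, kchain adj 2 X y l /\ last (y :: l) y = z.
Proof.
  intros HX Hy H. induction H as [x|x w z Hxw _ IH]; [exists []; simpl; auto|].
  assert (Hw : X w) by eauto. destruct (IH Hw) as [l [Hk Hl]].
  exists (w :: l). split; [|rewrite last_cons_cons; exact Hl].
  repeat split; auto. apply Hxw.
Qed.

Lemma same_block_is_block x : exists N, is_block adj 2 (layer N) (same_block x).
Proof.
  destruct (layer_exists x) as [N HN]. exists N. split; [|split; [|split]].
  - exists x. apply same_block_refl.
  - intros y Hy. eapply same_block_layer; eauto.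
  - intros y z Hy Hz.
    destruct (same_block_trans (same_block_sym Hy) Hz) as [N' [H1 H2]].
    apply (@layer_step_rt_kchain N'); auto.
    intros a b Ha Hab. apply same_block_trans with a; auto.
    exists N'. split; [apply Hab | apply clos_rt1n_step, Hab].
  - intros B' H1 H2 H3 y Hy.
    destruct (H3 x y) as [l [Hk <-]]; [apply H1, same_block_refl | exact Hy|].
    exists N. split; [exact HN|]. apply kchain_layer_step_rt with B'; auto.
Qed.

Lemma is_block_same_block N b x :
  is_block adj 2 (layer N) b -> b x -> forall y, b y <-> same_block x y.
Proof.
  intros [_ [Hsub [Hk Hmax]]] Hx.
  assert (Hfwd : forall y, b y -> same_block x y).
  { intros y Hy. destruct (Hk x y Hx Hy) as [l [Hl <-]]. exists N.
    split; [auto|]. apply kchain_layer_step_rt with b; auto. }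
  intros y. split; [apply Hfwd|].
  apply Hmax; [exact Hfwd | intros z Hz; eapply same_block_layer; eauto |].
  destruct (same_block_is_block x) as [N' HB]. apply HB.
Qed.

Definition block_of (x : V) : skv := exist _ (same_block x) (same_block_is_block x).

Lemma block_of_mem x : proj1_sig (block_of x) x.
Proof. apply same_block_refl. Qed.

Lemma block_of_eq (w : skv) x : proj1_sig w x -> block_of x = w.
Proof.
  destruct w as [b Hbp]. simpl. intros Hx. pose proof Hbp as [N Hb].
  assert (E : same_block x = b).
  { apply functional_extensionality. intros y. apply propositional_extensionality.
    symmetry. apply (is_block_same_block Hb Hx). }
  unfold block_of. revert Hbp. rewrite <- E. intros Hbp. f_equal. apply proof_irrelevance.
Qed.

Lemma block_of_same x y : same_block x y -> block_of y = block_of x.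
Proof. intros H. apply block_of_eq. exact H. Qed.

Lemma skel_vtx_inhabited (w : skv) : exists x, proj1_sig w x.
Proof. destruct w as [b Hb]. simpl. destruct Hb as [N [H _]]. exact H. Qed.

Lemma block_of_surj (w : skv) : exists x, block_of x = w.
Proof. destruct (skel_vtx_inhabited w) as [x Hx]. exists x. apply block_of_eq, Hx. Qed.

Lemma skel_adj_block_of x y : adj x y -> sadj (block_of x) (block_of y).
Proof. intros H. exists x, y. repeat split; auto; apply block_of_mem. Qed.

Lemma dist_le_block_of x y a :
  dist_le adj x y a -> dist_le sadj (block_of x) (block_of y) a.
Proof.
  intros [l [H1 [<- H3]]]. exists (map block_of l). split; [|split].
  - clear H3. revert x H1; induction l; simpl; auto.
    intros x [A B]. split; auto. apply skel_adj_block_of; auto.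
  - clear. revert x; induction l; intros; auto. simpl map. rewrite !last_cons_cons. auto.
  - rewrite length_map. exact H3.
Qed.

Lemma skel_symmetric : symmetric_adj sadj.
Proof. intros w1 w2 [x [y [A [B C]]]]. exists y, x. repeat split; auto. Qed.

Lemma skel_connected : connected_graph sadj.
Proof.
  intros w1 w2. destruct (block_of_surj w1) as [x <-]. destruct (block_of_surj w2) as [y <-].
  destruct (Hconn x y) as [n Hn]. exists n. apply dist_le_block_of, Hn.
Qed.

Lemma dist_root_adj x y a b : adj x y -> dist adj x r a -> dist adj y r b -> b <= a + 1.
Proof.
  intros H [H1 _] [_ H2]. apply H2. rewrite Nat.add_comm.
  eapply dist_le_trans; [apply dist_le_adj, Hsym, H | exact H1].
Qed.

(* Heights change by at most 1 along an edge, so two of the three layers of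
   a 2-step walk coincide, and those two vertices are in the same block. *)
Lemma block_of_two_steps x y z :
  adj x y -> adj y z -> dist_le sadj (block_of x) (block_of z) 1.
Proof.
  intros Hxy Hyz.
  destruct (layer_exists x) as [Nx Hx]. destruct (layer_exists y) as [Ny Hy].
  destruct (layer_exists z) as [Nz Hz].
  pose proof Hx as [dx [Dx Bx]]%layer_iff. pose proof Hy as [dy [Dy By]]%layer_iff.
  pose proof Hz as [dz [Dz Bz]]%layer_iff.
  pose proof (dist_root_adj Hxy Dx Dy). pose proof (dist_root_adj (Hsym Hxy) Dy Dx).
  pose proof (dist_root_adj Hyz Dy Dz). pose proof (dist_root_adj (Hsym Hyz) Dz Dy).
  assert (Hstep : forall N a b, layer N a -> layer N b -> adj a b -> same_block a b).
  { intros N a b Ha Hb Hab. exists N. split; [exact Ha|].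
    apply clos_rt1n_step. repeat split; auto.
    eapply dist_le_weaken; [apply dist_le_adj, Hab | lia]. }
  assert (Nx = Nz \/ Nx = Ny \/ Ny = Nz) as [<-|[<-|<-]] by lia.
  - assert (Hxz : same_block x z).
    { exists Nx. split; [exact Hx|]. apply clos_rt1n_step. repeat split; auto.
      apply (dist_le_trans (dist_le_adj Hxy) (dist_le_adj Hyz)). }
    rewrite (block_of_same Hxz). apply dist_le_refl.
  - rewrite <- (block_of_same (Hstep Nx x y Hx Hy Hxy)).
    apply dist_le_adj, skel_adj_block_of, Hyz.
  - rewrite (block_of_same (Hstep Ny y z Hy Hz Hyz)).
    apply dist_le_adj, skel_adj_block_of, Hxy.
Qed.

Lemma dist_le_block_of_half x y a :
  dist_le adj x y (2 * a) -> dist_le sadj (block_of x) (block_of y) a.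
Proof.
  revert x y; induction a as [|a IH]; intros x y [l [Hw [<- Hl]]].
  - destruct l; [apply dist_le_refl | simpl in Hl; lia].
  - destruct l as [|y1 [|y2 l]]; [apply dist_le_refl| |].
    + eapply dist_le_weaken; [apply dist_le_adj, skel_adj_block_of, Hw | lia].
    + destruct Hw as [H1 [H2 Hw]]. rewrite !last_cons_cons.
      rewrite <- Nat.add_1_l. eapply dist_le_trans; [eapply block_of_two_steps; eauto|].
      apply IH. eapply dist_le_weaken; [apply dist_le_walk, Hw | simpl in Hl; lia].
Qed.

(* The closed 1-neighbourhood of the union of the blocks in [P]; the margin
   makes lifts of connected sets connected, since a block is only 2-connected. *)
Definition lift (P : skv -> Prop) (z : V) : Prop :=
  exists z', dist_le adj z' z 1 /\ P (block_of z').

Lemma lift_block_of (P : skv -> Prop) z : P (block_of z) -> lift P z.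
Proof. intros H. exists z. split; [apply dist_le_refl | exact H]. Qed.

Lemma same_block_walk_within_lift (P : skv -> Prop) x y :
  same_block x y -> P (block_of x) -> walk_within adj (lift P) x y.
Proof.
  intros [N [HN Hc]]. revert HN.
  induction Hc as [x|x y z [_ [Hy Hxy]] _ IH]; intros HN HP; [apply walk_within_refl|].
  assert (E : block_of y = block_of x).
  { apply block_of_same. exists N. split; [exact HN|]. apply clos_rt1n_step. repeat split; auto. }
  apply walk_within_trans with y.
  - apply walk_within_dist_le2; [exact Hxy | apply lift_block_of; rewrite E; exact HP |].
    intros z0 Hz0. exists x. auto.
  - apply IH; [exact Hy | rewrite E; exact HP].
Qed.

Lemma lift_skel_walk (P : skv -> Prop) lw : forall w0 x y, is_walk sadj w0 lw ->
  proj1_sig w0 x -> proj1_sig (last (w0 :: lw) w0) y ->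
  (forall w, In w (w0 :: lw) -> P w) -> walk_within adj (lift P) x y.
Proof.
  induction lw as [|w1 lw IH]; intros w0 x y Hw Hx Hy HP.
  - rewrite <- (block_of_eq Hx) in Hy, HP.
    apply same_block_walk_within_lift; [exact Hy | apply HP; left; reflexivity].
  - destruct Hw as [[a [c [Ha [Hc Hac]]]] Hw]. rewrite last_cons_cons in Hy.
    rewrite <- (block_of_eq Hx) in Ha, HP.
    apply walk_within_trans with a; [|apply walk_within_trans with c].
    + apply same_block_walk_within_lift; [exact Ha | apply HP; left; reflexivity].
    + apply walk_within_edge; [exact Hac|]. apply lift_block_of.
      rewrite (block_of_eq Hc). apply HP. right; left; reflexivity.
    + apply (IH w1); auto. intros w Hin; apply HP; right; exact Hin.
Qed.

Lemma lift_conn_set (P : skv -> Prop) : conn_set sadj P -> conn_set adj (lift P).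
Proof.
  intros [[w Hw] Hc]. split.
  - destruct (skel_vtx_inhabited w) as [x Hx]. exists x. apply lift_block_of.
    rewrite (block_of_eq Hx). exact Hw.
  - intros a b [a' [Ha1 Ha2]] [b' [Hb1 Hb2]].
    destruct (Hc _ _ Ha2 Hb2) as [lw [W1 [W2 W3]]].
    apply walk_within_trans with a'; [|apply walk_within_trans with b'].
    + apply walk_within_dist_le1; [apply (dist_le_sym Hsym), Ha1 | apply lift_block_of, Ha2].
    + apply (lift_skel_walk W1); [apply block_of_mem | rewrite W2; apply block_of_mem |].
      intros w2 [<-|Hin]; [exact Ha2 | eapply Forall_forall; eauto].
    + apply walk_within_dist_le1; [exact Hb1 | exists b'; auto].
Qed.

Lemma lift_M_disjoint (P Q : skv -> Prop) F : 1 <= F -> M_disjoint sadj F P Q ->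
  M_disjoint adj (2 * F - 2) (lift P) (lift Q).
Proof.
  intros HF HD a b [a' [Ha1 Ha2]] [b' [Hb1 Hb2]] Hab.
  apply (HD _ _ Ha2 Hb2). apply dist_le_block_of_half.
  replace (2 * F) with (1 + ((2 * F - 2) + 1)) by lia.
  eapply dist_le_trans; [exact Ha1|]. eapply dist_le_trans; [exact Hab|].
  apply (dist_le_sym Hsym), Hb1.
Qed.

Lemma lift_skel_path (p' : list skv) (a' b' : skv) : gpath sadj p' a' b' ->
  exists p a b, proj1_sig a' a /\ proj1_sig b' b /\ gpath adj p a b /\
    forall z, In z p -> lift (fun w => In w p') z.
Proof.
  intros [l [-> [E2 [E3 _]]]].
  destruct (skel_vtx_inhabited a') as [a Ha]. destruct (skel_vtx_inhabited b') as [b Hb].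
  destruct (@lift_skel_walk (fun w => In w (a' :: l)) l a' a b) as [lw [W1 [W2 W3]]];
    [exact E2 | exact Ha | rewrite E3; exact Hb | auto |].
  destruct (walk_to_path W1) as [p [Hp Hinc]]. rewrite W2 in Hp.
  exists p, a, b. repeat split; auto.
  intros z Hz. apply Hinc in Hz as [<-|Hz].
  - apply lift_block_of. rewrite (block_of_eq Ha). left; reflexivity.
  - eapply Forall_forall in W3; eauto.
Qed.

Lemma M_fat_minor_lift (VH EH : Type) (ends : EH -> VH * VH) F : 1 <= F ->
  M_fat_minor sadj F ends -> M_fat_minor adj (2 * F - 2) ends.
Proof.
  intros HF [B' [P' [Hc [Hp [Hd1 [Hd2 Hd3]]]]]].
  assert (Hpath : forall e, exists p,
    (exists a b, lift (B' (fst (ends e))) a /\ lift (B' (snd (ends e))) b /\ gpath adj p a b) /\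
    forall z, In z p -> lift (fun w => In w (P' e)) z).
  { intros e. destruct (Hp e) as [a' [b' [Ha' [Hb' Hg]]]].
    destruct (lift_skel_path Hg) as [p [a [b [Ha [Hb [Hpab Hlift]]]]]].
    exists p. split; [|exact Hlift]. exists a, b. split; [|split; [|exact Hpab]];
      apply lift_block_of; [rewrite (block_of_eq Ha) | rewrite (block_of_eq Hb)]; assumption. }
  destruct (choice _ Hpath) as [P HP].
  exists (fun v => lift (B' v)), P.
  split; [|split; [|split; [|split]]].
  - intros v. apply lift_conn_set, Hc.
  - intros e. apply HP.
  - intros u v Huv. apply lift_M_disjoint; auto.
  - intros e f Hef. eapply M_disjoint_weaken; [apply (lift_M_disjoint HF (Hd2 e f Hef)) | lia | |];
      intros z; apply HP.
  - intros v e Hv1 Hv2.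
    eapply M_disjoint_weaken; [apply (lift_M_disjoint HF (Hd3 v e Hv1 Hv2)) | lia | auto |].
    intros z; apply HP.
Qed.

Lemma weakly_bottlenecked_skel M n :
  weakly_bottlenecked adj M n -> weakly_bottlenecked sadj (M + 1) n.
Proof.
  intros HWB X' Y' HX HY HD.
  destruct (HWB (lift X') (lift Y') (lift_conn_set HX) (lift_conn_set HY)) as [cs [Hcs Hsep]].
  { eapply M_disjoint_weaken;
      [apply (lift_M_disjoint (F := M + 1) ltac:(lia) HD) | lia | auto | auto]. }
  exists (map block_of cs). split; [rewrite length_map; exact Hcs|].
  intros p' x' y' Hx' Hy' Hg.
  destruct (lift_skel_path Hg) as [p [a [b [Ha [Hb [Hpab Hlift]]]]]].
  destruct (Hsep p a b) as [z [Hz [s [Hs Hsz]]]]; [| |exact Hpab|].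
  - apply lift_block_of. rewrite (block_of_eq Ha). exact Hx'.
  - apply lift_block_of. rewrite (block_of_eq Hb). exact Hy'.
  - destruct (Hlift z Hz) as [z' [Hz'z Hz']].
    exists (block_of z'). split; [exact Hz'|].
    exists (block_of s). split; [apply in_map, Hs|].
    apply dist_lt_pred in Hsz as [HM Hsz].
    replace (M + 1) with (S (M - 1 + 1)) by lia. apply dist_lt_succ, dist_le_block_of.
    eapply dist_le_trans; [exact Hsz | apply (dist_le_sym Hsym), Hz'z].
Qed.

(* The ball of radius [2N - M - 1] around the root and the lifted block of a
   vertex in layer [N] are M-disjoint, while every geodesic from the root to
   the block leaves the ball within distance M + 3 of its end; so the
   separator covers the block with balls of radius 2M + 2. *)
Lemma root_ball_M_disjoint_block M x N : layer N x -> (Z.of_nat M < 2 * N)%Z ->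
  M_disjoint adj M (fun z => dist_le adj r z (Z.to_nat (2 * N - Z.of_nat M - 1)))
    (lift (fun w => w = block_of x)).
Proof.
  intros HN HM a b Ha [b' [Hb'b Hb']] Hab.
  pose proof (block_of_mem b') as Hxb'. rewrite Hb' in Hxb'.
  pose proof (same_block_layer Hxb' HN) as [d [[_ Hmin] Bd]]%layer_iff.
  assert (Hb'r : dist_le adj b' r (1 + (M + Z.to_nat (2 * N - Z.of_nat M - 1)))).
  { eapply dist_le_trans; [exact Hb'b|].
    eapply dist_le_trans; apply (dist_le_sym Hsym); eassumption. }
  apply Hmin in Hb'r. lia.
Qed.

Lemma block_covered M n x N : weakly_bottlenecked adj M n -> layer N x ->
  (Z.of_nat M < 2 * N)%Z -> exists cs, length cs <= n /\
    forall c, same_block x c -> exists s, In s cs /\ dist_le adj s c (2 * M + 2).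
Proof.
  intros HWB HN HM.
  pose proof (root_ball_M_disjoint_block HN HM) as HD.
  set (h := Z.to_nat (2 * N - Z.of_nat M - 1)) in HD.
  destruct (HWB _ _ (ball_conn_set Hsym r h)
              (lift_conn_set (conn_set_singleton sadj (block_of x))) HD) as [cs [Hcs Hsep]].
  exists cs. split; [exact Hcs|].
  intros c Hc. pose proof (same_block_layer Hc HN) as [dc [[Hcr _] Bc]]%layer_iff.
  assert (HYc : lift (fun w => w = block_of x) c).
  { exists c. split; [apply dist_le_refl | apply block_of_same, Hc]. }
  destruct (dist_le_sym Hsym Hcr) as [l [W1 [W2 W3]]].
  destruct (le_lt_dec (length l) h) as [Hle|Hgt].
  { exfalso. apply (HD c c); [exists l; auto | exact HYc | apply dist_le_refl]. }
  rewrite <- (firstn_skipn h l) in W1, W2.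
  apply is_walk_app in W1 as [W1a W1b]. rewrite last_cons_app in W2.
  set (g := last (r :: firstn h l) r) in *.
  assert (Xg : dist_le adj r g h).
  { exists (firstn h l). repeat split; auto. rewrite length_firstn. lia. }
  destruct (walk_to_path W1b) as [p [Hg Hinc]]. rewrite W2 in Hg.
  destruct (Hsep p g c Xg HYc Hg) as [z [Hz [s [Hs Hsz]]]].
  exists s. split; [exact Hs|].
  apply dist_lt_pred in Hsz as [HM1 Hsz].
  destruct (walk_vertex_dist_le W1b (Hinc z Hz)) as [_ Hzc].
  rewrite W2, length_skipn in Hzc.
  eapply dist_le_weaken; [eapply dist_le_trans; eassumption | unfold h in *; lia].
Qed.

(* [2M + 4] bounds blocks within M of the root; [4M + 6] is the cost
   [2(2M + 2) + 2] of crossing one covering ball in [kchain_covered_dist_le]. *)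
Definition block_diam_bound (M n : nat) : nat := 2 * M + 4 + n * (4 * M + 6).

Lemma same_block_dist_le M n x y : weakly_bottlenecked adj M n ->
  same_block x y -> dist_le adj x y (block_diam_bound M n).
Proof.
  intros HWB Hxy. destruct (layer_exists x) as [N HN].
  destruct (Z_le_gt_dec (2 * N) (Z.of_nat M)) as [Hlow|Hhigh].
  - pose proof HN as [dx [[Dx _] Bx]]%layer_iff.
    pose proof (same_block_layer Hxy HN) as [dy [[Dy _] By]]%layer_iff.
    eapply dist_le_weaken; [apply (dist_le_trans Dx (dist_le_sym Hsym Dy))|].
    unfold block_diam_bound. lia.
  - destruct (block_covered HWB HN) as [cs [Hcs Hcov]]; [lia|].
    destruct (same_block_is_block x) as [N' [_ [_ [Hk _]]]].
    destruct (Hk x y (same_block_refl x) Hxy) as [l [Hch <-]].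
    eapply dist_le_weaken; [apply (kchain_covered_dist_le Hsym (R := 2 * M + 2) Hcs Hch)|].
    + intros c [<-|Hc]; apply Hcov; [apply same_block_refl|].
      eapply Forall_forall; [apply (kchain_Forall Hch) | exact Hc].
    + unfold block_diam_bound. lia.
Qed.

Lemma skel_walk_dist_le M n lw : weakly_bottlenecked adj M n -> forall w0 x y,
  is_walk sadj w0 lw -> proj1_sig w0 x -> proj1_sig (last (w0 :: lw) w0) y ->
  dist_le adj x y (length lw * (block_diam_bound M n + 1) + block_diam_bound M n).
Proof.
  intros HWB. induction lw as [|w1 lw IH]; intros w0 x y Hw Hx Hy.
  - rewrite <- (block_of_eq Hx) in Hy. apply (same_block_dist_le HWB Hy).
  - destruct Hw as [[a [c [Ha [Hc Hac]]]] Hw]. rewrite last_cons_cons in Hy.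
    rewrite <- (block_of_eq Hx) in Ha.
    pose proof (dist_le_trans (dist_le_adj Hac) (IH w1 c y Hw Hc Hy)) as Hcy.
    eapply dist_le_weaken; [apply (dist_le_trans (same_block_dist_le HWB Ha) Hcy) | simpl; lia].
Qed.

Lemma dist_le_block_of_inv M n x y m : weakly_bottlenecked adj M n ->
  dist_le sadj (block_of x) (block_of y) m ->
  dist_le adj x y (m * (block_diam_bound M n + 1) + block_diam_bound M n).
Proof.
  intros HWB [lw [W1 [W2 Hlen]]].
  eapply dist_le_weaken; [apply (skel_walk_dist_le HWB W1 (block_of_mem x)) | nia].
  rewrite W2. apply block_of_mem.
Qed.

End Skeleton.

Lemma quasi_isometry_of_coarse_inverse (V W : Type) (adjV : V -> V -> Prop)
    (adjW : W -> W -> Prop) (f : V -> W) K : 1 <= K ->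
  (forall x y a, dist_le adjV x y a -> dist_le adjW (f x) (f y) a) ->
  (forall x y m, dist_le adjW (f x) (f y) m -> dist_le adjV x y (K * (m + 1))) ->
  (forall w, exists x, f x = w) -> quasi_isometry adjV adjW K K.
Proof.
  intros HK Hlip Hinv Hsurj. exists f. split.
  - intros x y a b [Ha Hamin] [Hb Hbmin].
    pose proof (Hamin _ (Hinv x y b Hb)). pose proof (Hbmin _ (Hlip x y a Ha)). nia.
  - intros w. destruct (Hsurj w) as [x <-]. exists x. apply dist_le_refl.
Qed.

Section Tower.
Variable V : Type.
Variable adj : V -> V -> Prop.
Hypothesis Hsym : symmetric_adj adj.
Hypothesis Hconn : connected_graph adj.
Variables (VH EH : Type) (ends : EH -> VH * VH).
Variables (M n steps : nat).
Hypothesis HWB : weakly_bottlenecked adj M n.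
Variable x0 : V.

Let D := block_diam_bound (M + steps) n.

Definition skeleton_level (k : nat) (W : Type) (adjW : W -> W -> Prop) (rw : W)
    (f : V -> W) : Prop :=
  iter_skel22 V adj x0 W adjW rw k /\ symmetric_adj adjW /\ connected_graph adjW /\
  weakly_bottlenecked adjW (M + k) n /\
  (forall x y a, dist_le adj x y a -> dist_le adjW (f x) (f y) a) /\
  (forall x y m, dist_le adjW (f x) (f y) m -> dist_le adj x y ((D + 1) ^ k * (m + 1))) /\
  (forall w, exists x, f x = w) /\
  (forall F, 5 <= F -> M_fat_minor adjW F ends -> M_fat_minor adj (F + 3 * k) ends).

Lemma skeleton_level_0 : skeleton_level 0 adj x0 (fun x => x).
Proof.
  split; [constructor|]. split; [exact Hsym|]. split; [exact Hconn|].
  split; [rewrite Nat.add_0_r; exact HWB|]. split; [auto|]. split.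
  - intros x y m H. eapply dist_le_weaken; [exact H | simpl; lia].
  - split; [intros w; exists w; reflexivity|]. intros F _ H. rewrite Nat.add_0_r. exact H.
Qed.

Lemma skeleton_level_succ k W (adjW : W -> W -> Prop) (rw : W) (f : V -> W) : k < steps ->
  skeleton_level k adjW rw f ->
  exists W' (adjW' : W' -> W' -> Prop) rw' f', skeleton_level (S k) adjW' rw' f'.
Proof.
  intros Hk (Hit & HsW & HcW & HwW & Hlip & Hinv & Hsurj & Hminor).
  exists (skel_vtx adjW rw 2 2), (@skel_adj W adjW rw 2 2), (block_of HsW HcW rw rw),
    (fun x => block_of HsW HcW rw (f x)).
  split; [apply iter_skel22_S; [exact Hit | apply block_of_mem]|].
  split; [apply (skel_symmetric HsW)|]. split; [apply (skel_connected HsW HcW)|].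
  split.
  { replace (M + S k) with (M + k + 1) by lia. apply (weakly_bottlenecked_skel HsW HcW), HwW. }
  split; [intros x y a H; apply (dist_le_block_of HsW HcW), Hlip, H|]. split; [|split].
  - intros x y m H. apply (dist_le_block_of_inv HwW), Hinv in H.
    eapply dist_le_weaken; [exact H|].
    assert (block_diam_bound (M + k) n <= D) by (unfold D, block_diam_bound; nia).
    rewrite Nat.pow_succ_r', (Nat.mul_comm (D + 1)), <- Nat.mul_assoc.
    apply Nat.mul_le_mono_l. nia.
  - intros w. destruct (block_of_surj HsW HcW w) as [u <-].
    destruct (Hsurj u) as [x <-]. exists x. reflexivity.
  - intros F HF H. apply (M_fat_minor_lift HsW HcW) in H; [|lia].
    apply (M_fat_minor_weaken (F' := F + 3)) in H; [|lia].
    replace (F + 3 * S k) with (F + 3 + 3 * k) by lia. apply Hminor; [lia | exact H].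
Qed.

Lemma skeleton_level_exists k : k <= steps ->
  exists W (adjW : W -> W -> Prop) rw f, skeleton_level k adjW rw f.
Proof.
  induction k as [|k IH]; intros Hk; [exists V, adj, x0, (fun x => x); apply skeleton_level_0|].
  destruct (IH ltac:(lia)) as (W & adjW & rw & f & Hlevel).
  refine (skeleton_level_succ _ Hlevel). lia.
Qed.

End Tower.

Theorem theorem3 :
  exists F : nat -> nat -> nat -> nat,
  forall (V : Type) (adj : V -> V -> Prop),
    symmetric_adj adj -> connected_graph adj -> unbounded_graph adj ->
  forall (VH EH : Type) (ends : EH -> VH * VH),
    (exists lv : list VH, forall v, In v lv) ->
    (exists le : list EH, forall e, In e le) ->
  forall M n M0 : nat,
    fat_bottlenecked adj M n ->
    ~ M_fat_minor adj M0 ends ->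
  forall x0 : V,
    exists (W : Type) (adjW : W -> W -> Prop) (r : W) (k : nat),
      iter_skel22 V adj x0 W adjW r k /\
      ~ M_fat_minor adjW 5 ends /\
      quasi_isometry adj adjW (F M n M0) (F M n M0).
Proof.
  exists (fun M n M0 => (block_diam_bound (M + M0) n + 1) ^ M0).
  intros V adj Hsym Hconn _ VH EH ends _ _ M n M0 HB HM x0.
  destruct (skeleton_level_exists Hsym Hconn ends (fat_bottlenecked_weakly HB) x0 (le_n M0))
    as (W & adjW & rw & f & Hit & _ & _ & _ & Hlip & Hinv & Hsurj & Hminor).
  exists W, adjW, rw, M0. split; [exact Hit|split].
  - intros H5. apply HM, (M_fat_minor_weaken (F := 5 + 3 * M0)); [apply Hminor; auto | lia].
  - apply (quasi_isometry_of_coarse_inverse (f := f)); [|exact Hlip | exact Hinv | exact Hsurj].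
    pose proof (Nat.pow_nonzero (block_diam_bound (M + M0) n + 1) M0). lia.
Qed.
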